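(* Let $n\ge1$ with $\gcd(n,q)=1$, $\mathbb{F}\supseteq\mathbb{F}_q$ a field containing the $n$-th roots of unity, $\gamma$ a primitive $n$-th root of unity, $\ell\ge2$ and $t\ge0$ integers. Let $a,b\le n$ be positive integers with $\gcd(a,n)=\gcd(b,n)=1$, and let $S,R\subseteq\{1,\dots,n\}$ satisfy $|\overline{S}|\le|S|+\mathrm{d}_R-2$, $|S|>t$ and $\mathrm{d}_S>t$. Let $A,B\subseteq\mathbb{F}^n$ be the cyclic codes with generating sets $aS$ and $bR$ respectively, let $\tilde C=\{\mathbf{c}\in\mathbb{F}^n: M(aS+bR)\mathbf{c}^T=0\}$ and $k=\dim\tilde C$. Assume (i) $B^\perp*\tilde C^{i}\subsetneq\mathbb{F}^n$ for all $i\in\{1,\dots,\ell-1\}$; (ii) every nonzero cyclic subcode of $B$ is non-degenerated. Define integers $\delta$ and $\gamma_1,\dots,\gamma_{\ell-1}$ by $n-k=|S|+|R|-1+\delta$ and $\dim B=\dim\big((B^\perp*\tilde C^i)^\perp\big)+i\dim\tilde C-i+\gamma_i$ for $i=1,\dots,\ell-1$. If $$t\le \ell n-\Big[\frac{\ell(\ell+1)}{2}(k-1)+\ell(|S|+\delta)+\sum_{i=1}^{\ell-1}\gamma_i\Big],$$ then $(A,B)$ is an $\ell$-power $t$-error locating pair for $\tilde C$.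
   Context: For $T=\{i_1,\dots,i_m\}\subseteq\{1,\dots,n\}$ (indices mod $n$), $M(T)$ is the $m\times n$ matrix with rows $(1,\gamma^{i_j},\dots,\gamma^{(n-1)i_j})$; the code with generating set $T$ is $\{\mathbf{u}M(T):\mathbf{u}\in\mathbb{F}^m\}$. $\mathrm{d}_T$ denotes the minimum distance of $\{\mathbf{c}\in\mathbb{F}^n:M(T)\mathbf{c}^T=0\}$. $\overline{S}$ is the smallest set of consecutive indices modulo $n$ containing $S$; $aS=\{as\bmod n:s\in S\}$; $S+R=\{s+r\bmod n\}$. Componentwise product $*$, $X*Y$ the span of products, $X^1=X$, $X^i=X*X^{i-1}$; duals w.r.t. $\langle\mathbf{u},\mathbf{v}\rangle=\sum u_iv_i$ on $\mathbb{F}^n$; $\mathrm{d}$ minimum distance. A code $H$ is degenerated if $\dim\{\mathbf{x}:\mathbf{x}*H\subseteq H\}>1$, equivalently it is a direct sum of nonzero subcodes with disjoint supports or every generator matrix has a zero column. A pair $(A,B)$ of codes in $\mathbb{F}^n$ is an $\ell$-power $t$-error locating pair for a code $C$ if: (1) $A*B\subseteq C^\perp$; (2) $\dim A>t$; (3) $\mathrm{d}(A^\perp)>t$; (4) $\mathrm{d}(A)+\mathrm{d}(C)>n$; (5) $\dim B+\sum_{i=2}^{\ell}\dim(B^\perp*C^{i-1})^\perp\ge t$. *)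

(* Codes in F^n are represented by square matrices 'M[F]_n,
   the code being the row space of the matrix (mxalgebra %MS conventions). *)
From HB Require Import structures.
From mathcomp Require Import all_boot all_order all_algebra.
From mathcomp Require Import boolp.
Set Implicit Arguments. Unset Strict Implicit. Unset Printing Implicit Defensive.
Import Order.TTheory GRing.Theory Num.Theory.
Local Open Scope ring_scope.

Section Codes.
Variable F : fieldType.
Variable n : nat.

Definition rowprod (u v : 'rV[F]_n) : 'rV[F]_n := \row_j (u 0 j * v 0 j).

Definition cprod (X Y : 'M[F]_n) : 'M[F]_n :=
  (\sum_(i < n) \sum_(j < n) <<rowprod (row i X) (row j Y)>>)%MS.

(* X^i with X^1 = X, X^i = X * X^(i-1)  (the value at i = 0 is irrelevant) *)
Definition cpow (X : 'M[F]_n) (i : nat) : 'M[F]_n := iter i.-1 (cprod X) X.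

Definition dual (X : 'M[F]_n) : 'M[F]_n := kermx X^T.

Definition wt (v : 'rV[F]_n) : nat := #|[set j | v 0 j != 0]|.

(* minimum distance; the zero code gets distance n+1 (stands for infinity) *)
Definition mindist (X : 'M[F]_n) : nat :=
  \big[minn/n.+1]_(m < n.+1 |
     `[< exists v : 'rV[F]_n, [/\ (v <= X)%MS, v != 0 & wt v = m] >]) (m : nat).

(* M(T): rows (1, g^i, ..., g^((n-1) i)) for i in T; indices i in {1..n}
   are represented modulo n as elements of 'I_n; rows for i notin T are 0,
   which changes neither the row space nor the kernel. *)
Definition Mx (g : F) (T : {set 'I_n}) : 'M[F]_n :=
  \matrix_(i, j) if i \in T then g ^+ (i * j) else 0.

Definition dT (g : F) (T : {set 'I_n}) : nat := mindist (dual (Mx g T)).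

Definition smul (a : nat) (S : {set 'I_n}) : {set 'I_n} :=
  [set i : 'I_n | [exists s in S, (i : nat) == (a * s) %% n]%N].

Definition ssum (S R : {set 'I_n}) : {set 'I_n} :=
  [set i : 'I_n | [exists s in S, exists r in R, (i : nat) == (s + r) %% n]%N].

(* |bar S| : size of the smallest set of cyclically consecutive indices
   {c, c+1, ..., c+L-1} (mod n) containing S *)
Definition hull_size (S : {set 'I_n}) : nat :=
  \big[minn/n]_(c < n) \big[minn/n]_(L < n.+1 |
       S \subset [set i : 'I_n | ((i + n - c) %% n < L)%N]) (L : nat).

(* cyclic shift (v_0,...,v_{n-1}) |-> (v_{n-1}, v_0, ..., v_{n-2}) *)
Definition shiftmx : 'M[F]_n := \matrix_(i, j) ((j : nat) == (i + 1) %% n)%N%:R.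

Definition cyclic_code (H : 'M[F]_n) : bool := (H *m shiftmx <= H)%MS.

(* { x | x * H subset H } *)
Definition stab (H : 'M[F]_n) : 'M[F]_n :=
  (\bigcap_(i < n) kermx (diag_mx (row i H) *m cokermx H))%MS.

Definition degenerated (H : 'M[F]_n) : bool := (1 < \rank (stab H))%N.

Definition locating_pair (l t : nat) (A B C : 'M[F]_n) : Prop :=
  [/\ (cprod A B <= dual C)%MS,
      (t < \rank A)%N,
      (t < mindist (dual A))%N,
      (n < mindist A + mindist C)%N &
      (t <= \rank B + \sum_(2 <= i < l.+1) \rank (dual (cprod (dual B) (cpow C i.-1))))%N].

End Codes.

(* Multiplying indices by a unit a of Z/n is a coordinate permutation: the
   code spanned by M(aS) is the one spanned by M(S) for the primitive root
   gamma^a.  This gives dim A = |S| and d(A^perp) >= d_S, and componentwise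
   products of rows of M(aS) and M(bR) are rows of M(aS+bR), so A * B lies in
   the dual of C.  As S sits in a cyclic window of length |bar S|, a codeword
   of A vanishing at |bar S| coordinates comes from a polynomial of degree
   < |bar S| with |bar S| roots, whence d(A) > n - |bar S|.  Roos' rank count
   for A diag(c) B^T = 0, c in C, gives d(C) >= |bar S|, hence
   d(A) + d(C) > n.  The last condition is the arithmetic defining delta and
   the gamma_i. *)

From HB Require Import structures.
From mathcomp Require Import all_boot all_order all_algebra.
From mathcomp Require Import boolp.
From mathcomp Require Import zify ring.
Import Order.TTheory GRing.Theory Num.Theory.
Local Open Scope ring_scope.

Set Implicit Arguments.
Unset Strict Implicit.
Unset Printing Implicit Defensive.

Lemma exists_subset_card (T : finType) (X : {set T}) m :
  (m <= #|X|)%N -> exists2 J : {set T}, J \subset X & #|J| = m.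
Proof.
elim: m => [|m IH] mX; first by exists set0; rewrite ?sub0set ?cards0.
have [J JX cJ] := IH (ltnW mX).
have /card_gt0P [x] : (0 < #|X :\: J|)%N by rewrite cardsD (setIidPr JX) cJ subn_gt0.
rewrite inE => /andP [xJ xX].
by exists (x |: J); rewrite ?subUset ?sub1set ?xX ?JX // cardsU1 xJ cJ.
Qed.

Lemma bigminn_le_cond (I : finType) (P : pred I) (f : I -> nat) x0 i :
  P i -> (\big[minn/x0]_(j | P j) f j <= f i)%N.
Proof.
move=> Pi; rewrite -big_filter.
have : i \in filter P (index_enum I) by rewrite mem_filter Pi mem_index_enum.
elim: (filter _ _) => [|j s IH] //; rewrite big_cons in_cons => /orP [/eqP->|/IH].
  exact: geq_minl.
exact: leq_trans (geq_minr _ _).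
Qed.

Section MinimumDistance.
Variables (F : fieldType) (n : nat).
Implicit Types (X Y : 'M[F]_n) (v : 'rV[F]_n) (J : {set 'I_n}).

Lemma wt_le v : (wt v <= n)%N.
Proof. by rewrite /wt (leq_trans (max_card _)) ?card_ord. Qed.

Lemma wt_gt0 v : v != 0 -> (0 < wt v)%N.
Proof. by case/rV0Pn => j vj; apply/card_gt0P; exists j; rewrite inE. Qed.

Lemma card_zeros v : #|[set j | v 0 j == 0]| = (n - wt v)%N.
Proof.
have -> : #|[set j | v 0 j == 0]| = #|~: [set j | v 0 j != 0]|.
  by apply: eq_card => j; rewrite !inE negbK.
by have := cardsC [set j | v 0 j != 0]; rewrite card_ord -/(wt v); lia.
Qed.

Lemma wt_vanish v J : (forall j, j \in J -> v 0 j = 0) -> (wt v <= n - #|J|)%N.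
Proof.
move=> vJ; have zJ : J \subset [set j | v 0 j == 0].
  by apply/subsetP => j /vJ vj; rewrite inE vj.
by have := subset_leq_card zJ; rewrite card_zeros; have := wt_le v; lia.
Qed.

Lemma mindist_le X v : (v <= X)%MS -> v != 0 -> (mindist X <= wt v)%N.
Proof.
move=> vX v0; have wt_lt : (wt v < n.+1)%N by rewrite ltnS wt_le.
apply: (@bigminn_le_cond _ _ (fun m : 'I_n.+1 => (m : nat)) _ (Ordinal wt_lt)).
by apply/asboolP; exists v.
Qed.

Lemma mindist_ge X m : (m <= n.+1)%N ->
  (forall v, (v <= X)%MS -> v != 0 -> (m <= wt v)%N) -> (m <= mindist X)%N.
Proof.
move=> mn mwt; rewrite /mindist; elim/big_ind: _ => //.
  by move=> x y mx my; rewrite leq_min mx my.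
by move=> i /asboolP [v [vX v0 <-]]; apply: mwt.
Qed.

Lemma mindist_le_n1 X : (mindist X <= n.+1)%N.
Proof.
rewrite /mindist; elim/big_ind: _ => // [x y xn _|i _]; first by rewrite geq_min xn.
exact: ltnW.
Qed.

Lemma mindist_gt0 X : (0 < mindist X)%N.
Proof. by apply: mindist_ge => // v _; apply: wt_gt0. Qed.

Lemma mindistS X Y : (X <= Y)%MS -> (mindist Y <= mindist X)%N.
Proof.
move=> XY; apply: mindist_ge (mindist_le_n1 _) _ => v vX; apply: mindist_le.
exact: submx_trans XY.
Qed.

Lemma vanish_eq0 X v J : (n - #|J| < mindist X)%N -> (v <= X)%MS ->
  (forall j, j \in J -> v 0 j = 0) -> v = 0.
Proof.
move=> dX vX vJ; apply/eqP; apply: contraTT dX => v0; rewrite -leqNgt.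
exact: leq_trans (mindist_le vX v0) (wt_vanish vJ).
Qed.

Lemma dualS X Y : (X <= Y)%MS -> (dual Y <= dual X)%MS.
Proof.
by case/submxP=> W ->; rewrite /dual sub_kermx trmx_mul mulmxA mulmx_ker mul0mx.
Qed.

Lemma submx_dual_dual X : (X <= dual (dual X))%MS.
Proof.
by rewrite /dual sub_kermx -[X in X *m _]trmxK -trmx_mul mulmx_ker trmx0.
Qed.

End MinimumDistance.

Section CoordinateProjection.
Variables (F : fieldType) (n : nat).
Implicit Types (J K I : {set 'I_n}).

Definition cproj J : 'M[F]_n := diag_mx (\row_j (j \in J)%:R).

Lemma mul_cproj m (M : 'M[F]_(m, n)) J :
  M *m cproj J = \matrix_(i, j) (M i j * (j \in J)%:R).
Proof. by rewrite mul_mx_diag; apply/matrixP => i j; rewrite !mxE. Qed.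

Lemma cprojM J K : cproj J *m cproj K = cproj (J :&: K).
Proof.
rewrite mul_cproj; apply/matrixP => i j; rewrite !mxE inE.
by case: eqP => [->|_]; case: (j \in J); case: (j \in K); rewrite ?mulr0n ?mulr1 ?mulr0.
Qed.

Lemma cprojID J K : cproj J = cproj (J :&: K) + cproj (J :\: K).
Proof.
apply/matrixP => i j; rewrite !mxE !inE.
by case: (i \in J); case: (i \in K); rewrite ?mul0rn ?add0r ?addr0.
Qed.

Lemma cprojT : cproj setT = 1%:M.
Proof. by apply/matrixP => i j; rewrite !mxE inE. Qed.

Lemma cproj0 : cproj set0 = 0.
Proof. by apply/matrixP => i j; rewrite !mxE inE mul0rn. Qed.

Lemma tr_cproj J : (cproj J)^T = cproj J.
Proof. exact: tr_diag_mx. Qed.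

Lemma rank_cproj_le J : (\rank (cproj J) <= #|J|)%N.
Proof.
rewrite /cproj diag_mx_sum_delta -sum1_card [X in (_ <= X)%N]big_mkcond /=.
apply: (big_ind2 (fun (M : 'M[F]_n) k => \rank M <= k)%N) => [|x1 x2 y1 y2 r1 r2|i _].
- by rewrite mxrank0.
- exact: leq_trans (mxrank_add _ _) (leq_add r1 r2).
- by rewrite mxE; case: (i \in J); rewrite ?scale1r ?mxrank_delta ?scale0r ?mxrank0.
Qed.

Lemma rank_cproj J : \rank (cproj J) = #|J|.
Proof.
apply/eqP; rewrite eqn_leq rank_cproj_le /=.
have := rank_cproj_le (~: J); have := cardsC J; rewrite card_ord.
have : (n <= \rank (cproj J) + \rank (cproj (~: J)))%N.
  by rewrite -{1}(mxrank1 F n) -cprojT (cprojID _ J) setTI setTD mxrank_add.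
move=> le_n cardJ le_rC; rewrite -(leq_add2r #|~: J|) cardJ.
exact: leq_trans le_n (leq_add (leqnn _) le_rC).
Qed.

Lemma rank_mul_cproj_subset (A : 'M[F]_n) I J : I \subset J ->
  (\rank (A *m cproj J) <= \rank (A *m cproj I) + #|J :\: I|)%N.
Proof.
move=> IJ; rewrite (cprojID J I) (setIidPr IJ) mulmxDr.
apply: leq_trans (mxrank_add _ _) _; rewrite leq_add2l -rank_cproj.
exact: mxrankM_maxr.
Qed.

Lemma rank_mul_diag_supp m (A : 'M[F]_(m, n)) (c : 'rV[F]_n) :
  \rank (A *m diag_mx c) = \rank (A *m cproj [set j | c 0 j != 0]).
Proof.
set I := [set j | _]; apply/eqP; rewrite eqn_leq; apply/andP; split.
  have -> : A *m diag_mx c = A *m cproj I *m diag_mx c.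
    rewrite -mulmxA /cproj mul_diag_mx; congr (_ *m _); apply/matrixP => i j.
    rewrite !mxE inE; case: (c 0 i =P 0) => [->|_]; first by rewrite mul0rn mulr0.
    by rewrite mul1r.
  exact: mxrankM_maxl.
have -> : A *m cproj I = A *m diag_mx c *m diag_mx (\row_j (c 0 j)^-1).
  rewrite -mulmxA [diag_mx c *m _]mul_mx_diag; congr (_ *m _).
  apply/matrixP => i j; rewrite !mxE inE.
  case: (i =P j) => [->|_]; last by rewrite !mulr0n mul0r.
  by case: (c 0 j =P 0) => [->|/eqP cj]; rewrite ?mul0r // mulfV.
exact: mxrankM_maxl.
Qed.

Lemma rank_orth (X Y : 'M[F]_n) I :
  X *m Y^T = 0 -> X *m cproj I = X -> Y *m cproj I = Y ->
  (\rank X + \rank Y <= #|I|)%N.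
Proof.
move=> XY XI YI; set K := kermx X^T; set Pc := cproj (~: I).
have YK : (Y <= K *m cproj I)%MS.
  by rewrite -YI submxMr // sub_kermx -[Y]trmxK -trmx_mul XY trmx0.
have PcK : (Pc <= K :&: kermx (cproj I))%MS.
  rewrite sub_capmx !sub_kermx /Pc cprojM setIC setICr cproj0 eqxx andbT.
  by rewrite -tr_cproj -trmx_mul -XI -mulmxA cprojM setICr cproj0 mulmx0 trmx0.
have := mxrankS YK; have := mxrankS PcK; have := mxrank_mul_ker K (cproj I).
rewrite mxrank_ker mxrank_tr /Pc !rank_cproj.
have := cardsC I; have := rank_leq_col X; rewrite card_ord.
lia.
Qed.

End CoordinateProjection.

Section RankAndDistance.
Variables (F : fieldType) (n : nat).
Implicit Types (A B : 'M[F]_n) (I J : {set 'I_n}).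

Lemma rank_mul_cproj_mindist A J :
  (n - #|J| < mindist A)%N -> \rank (A *m cproj F J) = \rank A.
Proof.
move=> dA; apply/eqP; rewrite eqn_leq mxrankM_maxl /=.
have kerAJ : (kermx (A *m cproj F J) <= kermx A)%MS.
  apply/row_subP => i; rewrite sub_kermx; set r := row i _.
  have rAJ : r *m A *m cproj F J = 0 by rewrite -mulmxA -row_mul mulmx_ker row0.
  apply/eqP; apply: (vanish_eq0 dA (submxMl _ _)) => j jJ.
  by have := congr1 (fun v : 'rV[F]_n => v 0 j) rAJ; rewrite mul_cproj !mxE jJ mulr1.
have := mxrankS kerAJ; rewrite !mxrank_ker.
have := rank_leq_col A; have := rank_leq_col (A *m cproj F J).
lia.
Qed.

Lemma rank_mul_cproj_dual B J :
  (#|J| < mindist (dual B))%N -> \rank (B *m cproj F J) = #|J|.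
Proof.
move=> dB; apply/eqP; rewrite eqn_leq; apply/andP; split.
  by rewrite -[X in (_ <= X)%N](rank_cproj F J) mxrankM_maxr.
have kerBJ : (kermx (B *m cproj F J)^T <= kermx (cproj F J))%MS.
  apply/row_subP => i; rewrite sub_kermx; set r := row i _.
  have rBJ : r *m (B *m cproj F J)^T = 0 by rewrite -row_mul mulmx_ker row0.
  set z := r *m cproj F J.
  have zB : (z <= dual B)%MS by rewrite sub_kermx -mulmxA -tr_cproj -trmx_mul rBJ.
  have wz : (wt z <= #|J|)%N.
    apply: subset_leq_card; apply/subsetP => j; rewrite inE /z mul_cproj mxE.
    by case: (j \in J); rewrite ?mulr0 ?eqxx.
  apply/eqP; apply: contraTeq dB => z0; rewrite -leqNgt.
  exact: leq_trans (mindist_le zB z0) wz.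
have := mxrankS kerBJ; rewrite !mxrank_ker mxrank_tr rank_cproj.
have := rank_leq_col (B *m cproj F J); have : (#|J| <= n)%N.
  by rewrite -[X in (_ <= X)%N]card_ord max_card.
lia.
Qed.

Lemma rank_mul_cproj_mindist_ge A I L :
  (L <= n)%N -> (#|I| <= L)%N -> (n - L < mindist A)%N ->
  (\rank A <= \rank (A *m cproj F I) + (L - #|I|))%N.
Proof.
move=> Ln IL dA.
have [K KI cK] : exists2 K : {set 'I_n}, K \subset ~: I & #|K| = (L - #|I|)%N.
  by apply: (exists_subset_card (X := ~: I)); have := cardsC I; rewrite card_ord; lia.
have IK : [disjoint I & K] by rewrite disjoint_sym -[I]setCK -subsets_disjoint.
have cIK : #|I :|: K| = L by rewrite cardsU (disjoint_setI0 IK) cards0 cK; lia.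
rewrite -(rank_mul_cproj_mindist (J := I :|: K)) ?cIK //.
apply: leq_trans (rank_mul_cproj_subset _ (subsetUl I K)) _.
by rewrite setDUl setDv set0U (setDidPl _) ?cK // disjoint_sym.
Qed.

Lemma rank_mul_cproj_dual_ge B I :
  (minn #|I| (mindist (dual B)).-1 <= \rank (B *m cproj F I))%N.
Proof.
have [J JI cJ] := exists_subset_card (geq_minl #|I| (mindist (dual B)).-1).
rewrite -cJ -{1}(rank_mul_cproj_dual (B := B)); last first.
  by rewrite cJ (leq_ltn_trans (geq_minr _ _)) // ltn_predL mindist_gt0.
have -> : B *m cproj F J = B *m cproj F I *m cproj F J.
  by rewrite -mulmxA cprojM (setIidPr JI).
exact: mxrankM_maxl.
Qed.

(* Roos' argument: with I the support of c, the rows of A diag(c) and of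
   B cproj(I) are orthogonal and supported on I, so their ranks add up to at
   most |I|; the distance of A bounds the first rank from below, the dual
   distance of B the second. *)
Lemma roos_bound A B (c : 'rV[F]_n) (L d : nat) :
  A *m diag_mx c *m B^T = 0 -> c != 0 -> (forall j, col j A != 0) ->
  (L <= n)%N -> (n - L < mindist A)%N -> (d <= mindist (dual B))%N ->
  (L + 2 <= \rank A + d)%N -> (L <= wt c)%N.
Proof.
move=> ADB c0 Acol Ln dA dB Ld; set I := [set j | c 0 j != 0].
rewrite leqNgt [wt c]/wt -/I; apply/negP => IL.
set X := A *m diag_mx c; set Y := B *m cproj F I.
have cI : diag_mx c *m cproj F I = diag_mx c.
  rewrite mul_cproj; apply/matrixP => i j; rewrite !mxE inE.
  case: (i =P j) => [<-|_]; last by rewrite mulr0n mul0r.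
  by case: (c 0 i =P 0) => [->|_]; rewrite ?mul0r ?mulr1.
have rXY : (\rank X + \rank Y <= #|I|)%N.
  apply: rank_orth.
  - by rewrite trmx_mul tr_cproj mulmxA -(mulmxA A) cI.
  - by rewrite -mulmxA cI.
  - by rewrite -mulmxA cprojM setIid.
have rX : (\rank A <= \rank X + (L - #|I|))%N.
  by rewrite /X rank_mul_diag_supp rank_mul_cproj_mindist_ge // ltnW.
have rY : (minn #|I| (mindist (dual B)).-1 <= \rank Y)%N := rank_mul_cproj_dual_ge B I.
have [Id | dI] := leqP #|I| (mindist (dual B)).-1; last first.
  by move: rY; rewrite (minn_idPr (ltnW dI)); lia.
have /eqP : \rank X = 0%N by move: rY; rewrite (minn_idPl Id); lia.
rewrite mxrank_eq0 => /eqP X0.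
have [j cj] := rV0Pn _ c0.
have : c 0 j *: col j A == 0.
  apply/eqP/colP => i; have := congr1 (fun M : 'M[F]_n => M i j) X0.
  by rewrite /X mul_mx_diag !mxE mulrC.
by rewrite scaler_eq0 (negbTE cj) (negbTE (Acol j)).
Qed.

End RankAndDistance.

Section Windows.
Variables (n : nat) (n_gt0 : (0 < n)%N).

Definition window (c : 'I_n) (L : nat) : {set 'I_n} :=
  [set i : 'I_n | ((i + n - c) %% n < L)%N].

Lemma hull_size_le (S : {set 'I_n}) : (hull_size S <= n)%N.
Proof.
have minn_le x y : (x <= n)%N -> (y <= n)%N -> (minn x y <= n)%N.
  by rewrite geq_min => ->.
apply: (big_ind (fun m => m <= n)%N (leqnn n) minn_le) => c _.
by apply: (big_ind (fun m => m <= n)%N (leqnn n) minn_le) => L _; rewrite -ltnS.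
Qed.

Lemma hull_window (S : {set 'I_n}) : exists c, S \subset window c (hull_size S).
Proof.
have full c : S \subset window c n by apply/subsetP => i _; rewrite inE ltn_pmod.
apply: (big_ind (fun m => exists c, S \subset window c m)) => [|x y|c _].
- by exists (Ordinal n_gt0).
- by case: (leqP x y).
exists c; apply: (big_ind (fun m => S \subset window c m) (full c)) => // x y.
by case: (leqP x y).
Qed.

End Windows.

Section Vandermonde.
Variables (F : fieldType) (n : nat) (g : F).
Hypotheses (n_gt0 : (0 < n)%N) (g_prim : n.-primitive_root g).
Implicit Types (T J : {set 'I_n}).

Lemma Mx_entry T (u : 'rV[F]_n) j :
  (u *m Mx g T) 0 j = \sum_(i in T) u 0 i * g ^+ (i * j).
Proof.
rewrite mxE [RHS]big_mkcond; apply: eq_bigr => i _; rewrite mxE.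
by case: ifP; rewrite ?mulr0.
Qed.

Lemma expr_ord_inj (i j : 'I_n) : g ^+ i = g ^+ j -> i = j.
Proof.
by move/eqP; rewrite (eq_prim_root_expr g_prim) !modn_small // => /eqP /val_inj.
Qed.

(* Up to the factor [g ^+ (j * (n - c))], the sum is [Q.[g ^+ j]] for a
   polynomial [Q] of size <= L, which thus has #|J| >= L distinct roots. *)
Lemma window_coefs_eq0 T c L (f : 'I_n -> F) J :
  T \subset window c L -> (L <= #|J|)%N ->
  (forall j, j \in J -> \sum_(s in T) f s * g ^+ (s * j) = 0) ->
  forall s, s \in T -> f s = 0.
Proof.
move=> Twin LJ fJ.
pose e (s : 'I_n) := ((s + n - c) %% n)%N.
have e_inj : injective e.
  move=> s s'; rewrite /e -!addnBA ?(ltnW (ltn_ord c)) // => /eqP.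
  by rewrite eqn_modDr !modn_small // => /eqP /val_inj.
pose Q : {poly F} := \sum_(s in T) f s *: 'X^(e s).
have coefQ m : Q`_m = \sum_(s in T) f s * (m == e s)%:R.
  by rewrite coef_sum; apply: eq_bigr => s _; rewrite coefZ coefXn.
have sizeQ : (size Q <= L)%N.
  apply/leq_sizeP => m Lm; rewrite coefQ big1 // => s sT.
  have : (e s < L)%N by have := subsetP Twin s sT; rewrite inE.
  by case: eqP => [<-|_]; rewrite ?mulr0 // ltnNge Lm.
have rootQ j : j \in J -> Q.[g ^+ j] = 0.
  move=> jJ; rewrite horner_sum.
  rewrite (eq_bigr (fun s => g ^+ (j * (n - c)) * (f s * g ^+ (s * j)))).
    by rewrite -mulr_sumr fJ // mulr0.
  move=> s _; rewrite hornerZ hornerXn -exprM mulrCA -exprD.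
  congr (_ * _); rewrite -(prim_expr_mod g_prim) -[RHS](prim_expr_mod g_prim).
  congr (g ^+ _); rewrite /e -addnBA ?(ltnW (ltn_ord c)) //.
  by rewrite modnMmr mulnDr addnC (mulnC j s).
have Q0 : Q = 0.
  apply/eqP; apply: contraT => Q_neq0.
  pose rs := [seq g ^+ j | j : 'I_n <- enum J].
  have := max_poly_roots Q_neq0 (rs := rs).
  have -> : all (root Q) rs.
    by apply/allP => x /mapP [j]; rewrite mem_enum => jJ ->; apply/rootP/rootQ.
  have -> : uniq rs.
    by rewrite map_inj_in_uniq ?enum_uniq // => x y _ _ /expr_ord_inj.
  rewrite size_map -cardE => /(_ isT isT) JQ.
  by have := leq_trans JQ (leq_trans sizeQ LJ); rewrite ltnn.
move=> s sT; have := coefQ (e s); rewrite Q0 coef0 (bigD1 s) //= eqxx mulr1.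
rewrite big1 ?addr0 // => s' /andP [_ s's].
by case: eqP => [/e_inj es|_]; [rewrite es eqxx in s's | rewrite mulr0].
Qed.

Lemma rank_Mx T : \rank (Mx g T) = #|T|.
Proof.
rewrite -(rank_cproj F T); apply/eqP; rewrite eqn_leq; apply/andP; split.
  have -> : Mx g T = cproj F T *m Mx g T.
    apply/matrixP => i j; rewrite /cproj mul_diag_mx !mxE.
    by case: ifP; rewrite ?mul1r ?mul0r.
  exact: mxrankM_maxl.
have kerT : (kermx (Mx g T) <= kermx (cproj F T))%MS.
  apply/row_subP => i; rewrite sub_kermx; set r := row i _.
  have rT : r *m Mx g T = 0 by rewrite -row_mul mulmx_ker row0.
  have Twin : T \subset window (Ordinal n_gt0) n.
    by apply/subsetP => k _; rewrite inE ltn_pmod.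
  have r0 : forall s, s \in T -> r 0 s = 0.
    apply: (window_coefs_eq0 Twin (J := setT)); first by rewrite cardsT card_ord.
    by move=> j _; rewrite -Mx_entry rT mxE.
  rewrite mul_cproj; apply/eqP/rowP => j; rewrite mxE [RHS]mxE.
  by case: (boolP (j \in T)) => jT; [rewrite r0 ?mul0r | rewrite mulr0].
have := mxrankS kerT; rewrite !mxrank_ker.
have := rank_leq_col (Mx g T); have := rank_leq_col (cproj F T).
lia.
Qed.

Lemma mindist_Mx_window T c L :
  T \subset window c L -> (n - L < mindist (Mx g T))%N.
Proof.
move=> Twin; apply: mindist_ge; first by rewrite ltnS leq_subr.
move=> x /submxP [u ->] x0; set Z := [set j | (u *m Mx g T) 0 j == 0].
have ZL : (#|Z| < L)%N.
  rewrite ltnNge; apply: contra x0 => LZ; apply/eqP/rowP => j.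
  rewrite Mx_entry mxE big1 // => s sT.
  rewrite (window_coefs_eq0 Twin LZ _ sT) ?mul0r // => k.
  by rewrite inE -Mx_entry => /eqP.
by move: ZL; rewrite card_zeros; have := wt_le (u *m Mx g T); have := wt_gt0 x0; lia.
Qed.

Lemma col_Mx_neq0 T j : T != set0 -> col j (Mx g T) != 0.
Proof.
move=> /set0Pn [s sT]; have g_neq0 : g != 0 by rewrite (prim_root_eq0 g_prim) -lt0n.
apply: contraNneq (expf_neq0 (s * j) g_neq0) => /colP/(_ s).
by rewrite !mxE sT => ->.
Qed.

End Vandermonde.

Section ComponentwiseProduct.
Variables (F : fieldType) (n : nat).
Implicit Types (X Y : 'M[F]_n).

Lemma rowprod_sub_cprod X Y i j : (rowprod (row i X) (row j Y) <= cprod X Y)%MS.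
Proof.
by rewrite /cprod (sumsmx_sup i) // (sumsmx_sup j) ?genmxE.
Qed.

Lemma cprod_orth X Y (c : 'rV[F]_n) :
  (c <= dual (cprod X Y))%MS -> X *m diag_mx c *m Y^T = 0.
Proof.
move=> /sub_kermxP cXY; apply/matrixP => i j.
have orth : c *m (rowprod (row i X) (row j Y))^T = 0.
  have /submxP [W ->] := rowprod_sub_cprod X Y i j.
  by rewrite trmx_mul mulmxA cXY mul0mx.
transitivity ((c *m (rowprod (row i X) (row j Y))^T) 0 0); last by rewrite orth !mxE.
rewrite !mxE; apply: eq_bigr => k _.
by rewrite mul_mx_diag !mxE -mulrA mulrCA.
Qed.

Lemma cprod_orthS X Y X' Y' (c : 'rV[F]_n) :
  (c <= dual (cprod X Y))%MS -> (X' <= X)%MS -> (Y' <= Y)%MS ->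
  X' *m diag_mx c *m Y'^T = 0.
Proof.
move=> /cprod_orth XY0 /submxP [W ->] /submxP [V ->].
by rewrite trmx_mul -!mulmxA (mulmxA X) (mulmxA (X *m _)) XY0 mul0mx mulmx0.
Qed.

End ComponentwiseProduct.

Section CyclotomicCodes.
Variables (F : fieldType) (n : nat) (g : F).
Hypotheses (n_gt0 : (0 < n)%N) (g_prim : n.-primitive_root g).
Implicit Types (S R T U : {set 'I_n}).

Definition scale_ord (a : nat) (s : 'I_n) : 'I_n := Ordinal (ltn_pmod (a * s) n_gt0).

Lemma expr_scale_ord a s j : g ^+ (scale_ord a s * j) = (g ^+ a) ^+ (s * j).
Proof.
rewrite -exprM -(prim_expr_mod g_prim) -[RHS](prim_expr_mod g_prim) /=.
by rewrite modnMml mulnA.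
Qed.

Lemma scale_ord_inj a : coprime a n -> injective (scale_ord a).
Proof.
move=> co s s' ss'.
have ga_prim : n.-primitive_root (g ^+ a) by rewrite prim_root_exp_coprime.
apply: (expr_ord_inj ga_prim).
by rewrite -(muln1 s) -(muln1 s') -!expr_scale_ord ss'.
Qed.

Lemma smulP a S i :
  reflect (exists2 s, s \in S & i = scale_ord a s) (i \in smul a S).
Proof.
rewrite inE; apply: (iffP existsP) => [[s /andP [sS /eqP iE]]|[s sS ->]].
  by exists s => //; apply: val_inj.
by exists s; rewrite sS eqxx.
Qed.

Lemma row_Mx (h : F) T i :
  row i (Mx h T) = if i \in T then \row_j (h ^+ (i * j)) else 0.
Proof. by apply/rowP => j; rewrite !mxE; case: ifP; rewrite ?mxE. Qed.

Lemma eqmx_Mx_smul a S : (Mx g (smul a S) == Mx (g ^+ a) S)%MS.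
Proof.
apply/andP; split; apply/row_subP => i; rewrite row_Mx.
  case: ifP => [/smulP [s sS ->]|_]; last exact: sub0mx.
  have -> : \row_j g ^+ (scale_ord a s * j) = row s (Mx (g ^+ a) S).
    by rewrite row_Mx sS; apply/rowP => j; rewrite !mxE expr_scale_ord.
  exact: row_sub.
case: ifP => [iS|_]; last exact: sub0mx.
have aiS : scale_ord a i \in smul a S by apply/smulP; exists i.
have -> : \row_j (g ^+ a) ^+ (i * j) = row (scale_ord a i) (Mx g (smul a S)).
  by rewrite row_Mx aiS; apply/rowP => j; rewrite !mxE expr_scale_ord.
exact: row_sub.
Qed.

Lemma mulmx_tr_Mx_entry (h : F) T (v : 'rV[F]_n) r :
  (v *m (Mx h T)^T) 0 r = if r \in T then \sum_k v 0 k * h ^+ (r * k) else 0.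
Proof.
rewrite mxE; case: ifP => rT; last by rewrite big1 // => k _; rewrite !mxE rT mulr0.
by apply: eq_bigr => k _; rewrite !mxE rT.
Qed.

Lemma dT_le_dual_Mx_exp b R :
  coprime b n -> (dT g R <= mindist (dual (Mx (g ^+ b) R)))%N.
Proof.
move=> co; apply: mindist_ge (mindist_le_n1 _) _ => v vR v0.
have inj := scale_ord_inj co.
pose v' := \row_k v 0 (invF inj k).
have v'E j : v' 0 (scale_ord b j) = v 0 j by rewrite mxE invF_f.
have v'R : (v' <= dual (Mx g R))%MS.
  rewrite sub_kermx; apply/eqP/rowP => r; rewrite mulmx_tr_Mx_entry mxE.
  move: vR; rewrite sub_kermx => /eqP/rowP/(_ r); rewrite mulmx_tr_Mx_entry mxE.
  case: ifP => // _ vr; rewrite -[RHS]vr (reindex_inj inj); apply: eq_bigr => j _.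
  by rewrite v'E mulnC expr_scale_ord mulnC.
have v'0 : v' != 0.
  by apply: contra_neq v0 => v'_eq0; apply/rowP => j; rewrite -v'E v'_eq0 !mxE.
have <- : wt v' = wt v.
  by rewrite /wt -(card_preimset _ inj); apply: eq_card => j; rewrite !inE v'E.
exact: mindist_le.
Qed.

Lemma cprod_Mx T U : (cprod (Mx g T) (Mx g U) <= Mx g (ssum T U))%MS.
Proof.
apply/sumsmx_subP => i _; apply/sumsmx_subP => j _; rewrite genmxE !row_Mx.
case iT: (i \in T); last first.
  by rewrite (_ : rowprod _ _ = 0) ?sub0mx //; apply/rowP => k; rewrite !mxE mul0r.
case jU: (j \in U); last first.
  by rewrite (_ : rowprod _ _ = 0) ?sub0mx //; apply/rowP => k; rewrite !mxE mulr0.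
pose k := Ordinal (ltn_pmod (i + j) n_gt0).
have kTU : k \in ssum T U.
  rewrite inE; apply/existsP; exists i; rewrite iT.
  by apply/existsP; exists j; rewrite jU /=.
have -> : rowprod (\row_j0 g ^+ (i * j0)) (\row_j0 g ^+ (j * j0)) =
          row k (Mx g (ssum T U)).
  rewrite row_Mx kTU; apply/rowP => x; rewrite !mxE -exprD.
  by rewrite -(prim_expr_mod g_prim) -[RHS](prim_expr_mod g_prim) /= modnMml mulnDl.
exact: row_sub.
Qed.

Lemma rank_Mx_smul a S : coprime a n -> \rank (Mx g (smul a S)) = #|S|.
Proof.
move=> co; have ga_prim : n.-primitive_root (g ^+ a) by rewrite prim_root_exp_coprime.
by rewrite (eqmxP (eqmx_Mx_smul a S)) (rank_Mx (g := g ^+ a) n_gt0 ga_prim).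
Qed.

Lemma dT_le_dual_Mx_smul a S :
  coprime a n -> (dT g S <= mindist (dual (Mx g (smul a S))))%N.
Proof.
move=> co; apply: leq_trans (dT_le_dual_Mx_exp S co) _.
by apply/mindistS/dualS; rewrite (eqmxP (eqmx_Mx_smul a S)).
Qed.

Lemma mindist_Mx_smul a S :
  coprime a n -> (n - hull_size S < mindist (Mx g (smul a S)))%N.
Proof.
move=> co; have ga_prim : n.-primitive_root (g ^+ a) by rewrite prim_root_exp_coprime.
have [c Swin] := hull_window n_gt0 S.
apply: leq_trans (mindist_Mx_window (g := g ^+ a) n_gt0 ga_prim Swin) _.
by apply: mindistS; rewrite (eqmxP (eqmx_Mx_smul a S)).
Qed.

Lemma roos_bound_Mx a b S R :
  coprime a n -> coprime b n -> (0 < #|S|)%N ->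
  (hull_size S + 2 <= #|S| + dT g R)%N ->
  (hull_size S <= mindist (dual (Mx g (ssum (smul a S) (smul b R)))))%N.
Proof.
move=> coa cob S_gt0 hullSR.
have ga_prim : n.-primitive_root (g ^+ a) by rewrite prim_root_exp_coprime.
have [c0 Swin] := hull_window n_gt0 S.
apply: mindist_ge => [|c cC c_neq0]; first exact/leqW/hull_size_le.
apply: (roos_bound (A := Mx (g ^+ a) S) (B := Mx (g ^+ b) R) (d := dT g R)) => //.
- apply: cprod_orthS (submx_trans cC (dualS (cprod_Mx _ _))) _ _.
  + by rewrite (eqmxP (eqmx_Mx_smul a S)).
  + by rewrite (eqmxP (eqmx_Mx_smul b R)).
- by move=> j; apply: (col_Mx_neq0 (g := g ^+ a) n_gt0 ga_prim); rewrite -card_gt0.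
- exact: hull_size_le.
- exact: (mindist_Mx_window (g := g ^+ a) n_gt0 ga_prim Swin).
- exact: dT_le_dual_Mx_exp.
- by rewrite (rank_Mx (g := g ^+ a) n_gt0 ga_prim).
Qed.

End CyclotomicCodes.

Lemma sum_affine (m : nat) (x y : int) (f : nat -> int) :
  \sum_(1 <= i < m.+1) (x - i%:Z * y - f i) =
  m%:Z * x - 'C(m.+1, 2)%:Z * y - \sum_(1 <= i < m.+1) f i.
Proof.
rewrite !sumrB sumr_const_nat subn1 -mulr_suml -mulr_natl natz.
by rewrite -(big_morph Posz PoszD (erefl 0%:Z)) -bin2_sum [in RHS]big_ltn.
Qed.

Lemma sum_rank_bound (l n k s r t : nat) (delta : int) (rk : nat -> nat)
    (gam : nat -> int) :
  (0 < l)%N ->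
  n%:Z - k%:Z = (s + r)%N%:Z - 1 + delta ->
  (forall i, (0 < i < l)%N -> r%:Z = (rk i)%:Z + (i * k)%N%:Z - i%:Z + gam i) ->
  t%:Z <= (l * n)%N%:Z - (((l * l.+1) %/ 2)%N%:Z * (k%:Z - 1)
                          + l%:Z * (s%:Z + delta) + \sum_(1 <= i < l) gam i) ->
  (t <= r + \sum_(2 <= i < l.+1) rk i.-1)%N.
Proof.
case: l => // m _ n_k rk_r t_le.
rewrite big_add1 /= -lez_nat PoszD.
rewrite (big_morph Posz PoszD (erefl (Posz 0%N))).
rewrite (eq_big_nat _ _ (F2 := fun i => r%:Z - i%:Z * (k%:Z - 1) - gam i)); last first.
  by move=> i /rk_r ->; rewrite PoszM; ring.
rewrite sum_affine; apply: le_trans t_le _; rewrite le_eqVlt; apply/orP; left.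
have -> : ((m.+1 * m.+2) %/ 2)%N = ('C(m.+1, 2) + m.+1)%N.
  by transitivity 'C(m.+2, 2); [rewrite bin2 divn2 mulnC | rewrite binS bin1].
have r_eq : r%:Z = n%:Z - k%:Z - s%:Z + 1 - delta by move: n_k; rewrite PoszD; lia.
by apply/eqP; rewrite r_eq PoszM PoszD intS; ring.
Qed.

Theorem theorem6p4 (Fq : finFieldType) (F : fieldType) (iota : {rmorphism Fq -> F})
    (n : nat) (gamma : F) (l t a b : nat) (S R : {set 'I_n})
    (delta : int) (gam : nat -> int) :
  (0 < n)%N -> coprime n #|Fq| -> n.-primitive_root gamma -> (2 <= l)%N ->
  (0 < a <= n)%N -> (0 < b <= n)%N -> coprime a n -> coprime b n ->
  (hull_size S + 2 <= #|S| + dT gamma R)%N -> (t < #|S|)%N -> (t < dT gamma S)%N ->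
  let A := Mx gamma (smul a S) in
  let B := Mx gamma (smul b R) in
  let Ct := dual (Mx gamma (ssum (smul a S) (smul b R))) in
  let k := \rank Ct in
  (forall i : nat, (0 < i < l)%N -> ~~ row_full (cprod (dual B) (cpow Ct i))) ->
  (forall H : 'M[F]_n, (H <= B)%MS -> cyclic_code H -> H != 0 -> ~~ degenerated H) ->
  n%:Z - k%:Z = (#|S| + #|R|)%N%:Z - 1 + delta ->
  (forall i : nat, (0 < i < l)%N ->
     (\rank B)%:Z = (\rank (dual (cprod (dual B) (cpow Ct i))))%:Z
                    + (i * k)%N%:Z - i%:Z + gam i) ->
  t%:Z <= (l * n)%N%:Z - (((l * l.+1) %/ 2)%N%:Z * (k%:Z - 1)
                          + l%:Z * (#|S|%:Z + delta)
                          + \sum_(1 <= i < l) gam i) ->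
  locating_pair l t A B Ct.
Proof.
move=> n_gt0 _ g_prim l_ge2 _ _ coa cob hullSR tS tdS A B Ct k _ _ n_k rk_B t_le.
have rB : \rank B = #|R| := rank_Mx_smul n_gt0 g_prim R cob.
split.
- exact: submx_trans (cprod_Mx n_gt0 g_prim _ _) (submx_dual_dual _).
- by rewrite (rank_Mx_smul n_gt0 g_prim S coa).
- exact: leq_trans tdS (dT_le_dual_Mx_smul n_gt0 g_prim _ coa).
- have dC := roos_bound_Mx n_gt0 g_prim coa cob (leq_ltn_trans (leq0n t) tS) hullSR.
  have := mindist_Mx_smul n_gt0 g_prim S coa; have := hull_size_le S.
  by move: dC; rewrite -/A -/Ct; lia.
- pose rk i := \rank (dual (cprod (dual B) (cpow Ct i))).
  rewrite rB; apply: (sum_rank_bound (rk := rk) (ltnW l_ge2) n_k _ t_le) => i /rk_B.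
  by rewrite rB.
Qed.
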